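(* Let $K$ be an infinite commutative domain and $R$ an associative $K$-algebra on which $K$ acts torsion-freely. (i) If a semigroup $S$ satisfies an identity in variables $x,y,x_3,\dots$ which is left reduced (respectively right reduced, reduced), then $S$ satisfies an identity of the same type involving only the variables $x$ and $y$. (ii) If $R$ satisfies a binomial identity then either $R$ is bounded nil or $(R,\cdot)$ satisfies a semigroup identity. (iii) If $R$ satisfies a binomial identity which is left reduced (respectively right reduced, reduced) then $R$ satisfies a partial linear identity of the same type. (iv) If $y^n=0$ for all $y\in R$ then $e_{2n-1}=0$ for all $x,y\in R$.
   Context: A semigroup identity is $u=v$ with $u\ne v$ words in the free semigroup on $\{x,y,x_3,\dots\}$; it is left reduced if the first letters of $u,v$ differ, right reduced if the last letters differ, reduced if both. A binomial identity is a nontrivial polynomial identity $\alpha_1u_1+\alpha_2u_2=0$ ($u_1,u_2$ monomials, $\alpha_i\in K$), with left/right reduced defined via $u_1,u_2$ in the same way. $R$ is bounded nil if there is $n$ with $r^n=0$ for all $r\in R$. A partial linear identity is a nontrivial identity $\sum_{i=0}^n\alpha_iy^ixy^{n-i}=0$ ($\alpha_i\in K$); it is left reduced if $\alpha_0\ne0$, right reduced if $\alpha_n\neq0$, reduced if both. $e_1=[x,y]=xy-yx$, $e_{m+1}=[e_m,y]$. *)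

From HB Require Import structures.
From mathcomp Require Import all_boot all_order all_algebra.
Set Implicit Arguments. Unset Strict Implicit. Unset Printing Implicit Defensive.
Import GRing.Theory.
Local Open Scope ring_scope.

(* Variables x, y, x_3, x_4, ... are encoded as natural numbers 0, 1, 2, 3, ...
   A word of the free semigroup is a NONEMPTY sequence of variable indices. *)
Definition word := seq nat.

Definition weval (S : Type) (op : S -> S -> S) (f : nat -> S) (w : word) : S :=
  foldl (fun acc i => op acc (f i)) (f (head 0%N w)) (behead w).

Inductive rtype := LeftRed | RightRed | FullRed.

Definition first_letters_differ (u v : word) : bool := head 0%N u != head 0%N v.
Definition last_letters_differ (u v : word) : bool := last 0%N u != last 0%N v.

Definition of_rtype (t : rtype) (u v : word) : bool :=
  match t with
  | LeftRed => first_letters_differ u v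
  | RightRed => last_letters_differ u v
  | FullRed => first_letters_differ u v && last_letters_differ u v
  end.

Definition sg_identity (S : Type) (op : S -> S -> S) (u v : word) : Prop :=
  [/\ (0 < size u)%N, (0 < size v)%N, u != v &
      forall f : nat -> S, weval op f u = weval op f v].

Definition is_assoc_algebra (K : pzRingType) (R : lmodType K)
  (mul : R -> R -> R) : Prop :=
  [/\ associative mul,
      forall x y z, mul (x + y) z = mul x z + mul y z,
      forall x y z, mul x (y + z) = mul x y + mul x z,
      forall (a : K) x y, mul (a *: x) y = a *: mul x y &
      forall (a : K) x y, mul x (a *: y) = a *: mul x y].

Definition torsion_free (K : pzRingType) (R : lmodType K) : Prop :=
  forall (a : K) (r : R), a *: r = 0 -> a = 0 \/ r = 0.

Definition infinite_type (T : eqType) : Prop :=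
  ~ exists s : seq T, forall x : T, x \in s.

(* Binomial identity a1 u1 + a2 u2 = 0, nontrivial meaning the noncommutative
   polynomial a1 u1 + a2 u2 is nonzero. *)
Definition binomial_identity (K : pzRingType) (R : lmodType K)
  (mul : R -> R -> R) (a1 a2 : K) (u1 u2 : word) : Prop :=
  [/\ (0 < size u1)%N, (0 < size u2)%N,
      (if u1 == u2 then a1 + a2 != 0 else (a1 != 0) || (a2 != 0)) &
      forall f : nat -> R, a1 *: weval mul f u1 + a2 *: weval mul f u2 = 0].

(* r ^ n for n >= 1 (for n = 0 it returns r; only used with 0 < n). *)
Definition npow (R : Type) (mul : R -> R -> R) (r : R) (n : nat) : R :=
  iter n.-1 (mul r) r.

Definition bounded_nil (R : zmodType) (mul : R -> R -> R) : Prop :=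
  exists n : nat, (0 < n)%N /\ forall r : R, npow mul r n = 0.

(* The monomial y^i x y^(n-i) (x = variable 0, y = variable 1). *)
Definition plin_word (n i : nat) : word := nseq i 1%N ++ 0%N :: nseq (n - i) 1%N.

Definition partial_linear_identity (K : pzRingType) (R : lmodType K)
  (mul : R -> R -> R) (n : nat) (al : nat -> K) : Prop :=
  (exists2 i, (i <= n)%N & al i != 0) /\
  forall x y : R,
    \sum_(i < n.+1) al i *: weval mul (fun k => if k == 0%N then x else y)
                                     (plin_word n i) = 0.

Definition plin_of_rtype (K : pzRingType) (t : rtype) (n : nat) (al : nat -> K) : bool :=
  match t with
  | LeftRed => al 0%N != 0
  | RightRed => al n != 0
  | FullRed => (al 0%N != 0) && (al n != 0)
  end.

(* e_1 = [x,y], e_(m+1) = [e_m, y]; ecomm mul m x y = e_m for m >= 1. *)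
Definition ecomm (R : zmodType) (mul : R -> R -> R) (m : nat) (x y : R) : R :=
  iter m.-1 (fun z => mul z y - mul y z) (mul x y - mul y x).

From HB Require Import structures.
From mathcomp Require Import all_boot all_order all_algebra.
From mathcomp Require Import zify.
From Stdlib Require Import Classical.

(* Proof idea.
   (i) A 2-colouring of the variables separating the first (resp. last)
   letters of u and v turns u = v into a reduced identity in x and y.
   (ii), (iii) Scaling one variable by l in K multiplies a monomial by l to
   its degree in that variable; as K is infinite and R torsion-free, an
   R-valued polynomial in l vanishing everywhere has zero coefficients
   (Vandermonde).  So if u1 and u2 have different multidegrees, one of the
   monomials vanishes identically.  Otherwise either a1 + a2 = 0, and
   a1 (u1 - u2) = 0 yields the semigroup identity u1 = u2, or substituting r
   for every variable yields (a1 + a2) r^n = 0.  For (iii), substitute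
   y + l x for the variables of one colour and y for the others: the
   coefficient of l is a partial linear identity, constant when
   a1 + a2 <> 0, and with i-th coefficient +-a1 wherever the i-th letters of
   u1 and u2 have different colours when a1 + a2 = 0.
   (iv) e_m = (R_y - L_y)^m x, where right and left multiplication by y
   commute and satisfy R_y^n = L_y^n = 0, hence (R_y - L_y)^(2n-1) = 0. *)

Set Implicit Arguments.
Unset Strict Implicit.
Unset Printing Implicit Defensive.

Import GRing.Theory.
Local Open Scope ring_scope.

Section Substitution.
Variables (S : Type) (op : S -> S -> S).

Lemma weval_rcons f (w : word) a :
  (0 < size w)%N -> weval op f (rcons w a) = op (weval op f w) (f a).
Proof. by case: w => // b s _; rewrite /weval rcons_cons /= foldl_rcons. Qed.

Lemma weval_map f (h : nat -> nat) (w : word) :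
  (0 < size w)%N -> weval op f (map h w) = weval op (f \o h) w.
Proof.
case: w => // b s _; rewrite /weval /=.
by elim: s (f (h b)) => //= c s IH z; rewrite IH.
Qed.

Lemma sg_identity_map (h : nat -> nat) (u v : word) :
  sg_identity op u v -> map h u != map h v ->
  sg_identity op (map h u) (map h v).
Proof.
case=> su sv _ uv huv; split; rewrite ?size_map // => f.
by rewrite !weval_map.
Qed.

End Substitution.

Section Semigroup.
Variables (S : Type) (op : S -> S -> S).
Hypothesis opA : associative op.

Lemma npowSr (r : S) n : op (npow op r n.+1) r = npow op r n.+2.
Proof. by elim: n => //= n IH; rewrite -opA IH. Qed.

Lemma iter_opl (r z : S) n : iter n.+1 (op r) z = op (npow op r n.+1) z.
Proof. by elim: n => //= n IH; rewrite IH opA. Qed.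

Lemma iter_opr (r z : S) n :
  iter n.+1 (fun w => op w r) z = op z (npow op r n.+1).
Proof. by elim: n => //= n IH; rewrite IH -opA npowSr. Qed.

Lemma weval_const (r : S) (w : word) :
  (0 < size w)%N -> weval op (fun=> r) w = npow op r (size w).
Proof.
elim/last_ind: w => [//|[|b s] c IH] _ //.
by rewrite weval_rcons // IH // size_rcons npowSr.
Qed.

End Semigroup.

(** * Reduction to two variables *)

Lemma separating_colouring (a b c d : nat) :
  a != b -> c != d -> exists g : nat -> bool, (g a != g b) && (g c != g d).
Proof.
move=> ab cd.
have [acd|nacd] := boolP ((a == c) || (a == d)).
  exists (pred1 a); rewrite /= eqxx [b == a]eq_sym (negbTE ab) /=.
  by case/orP: acd => /eqP ->; rewrite eqxx ?[d == c]eq_sym (negbTE cd).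
have [bcd|nbcd] := boolP ((b == c) || (b == d)).
  exists (pred1 b); rewrite /= eqxx (negbTE ab) /=.
  by case/orP: bcd => /eqP ->; rewrite eqxx ?[d == c]eq_sym (negbTE cd).
exists (fun z => (z == a) || (z == c)); move: nacd nbcd.
rewrite !negb_or => /andP[_ ad] /andP[bc _].
by rewrite /= !eqxx orbT [b == a]eq_sym (negbTE ab) (negbTE bc)
  [d == a]eq_sym (negbTE ad) [d == c]eq_sym (negbTE cd).
Qed.

Lemma of_rtype_neq t (u v : word) : of_rtype t u v -> u != v.
Proof.
apply: contraL => /eqP ->.
by case: t; rewrite /= /first_letters_differ /last_letters_differ eqxx.
Qed.

Lemma of_rtype_colouring t (u v : word) :
  (0 < size u)%N -> (0 < size v)%N -> of_rtype t u v ->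
  exists g : nat -> bool,
    of_rtype t (map (nat_of_bool \o g) u) (map (nat_of_bool \o g) v).
Proof.
have eq_nat_of_bool (b1 b2 : bool) : (b1 == b2 :> nat) = (b1 == b2).
  by case: b1; case: b2.
have last_map0 (h : nat -> nat) x s : last 0%N (map h (x :: s)) = h (last x s).
  exact: last_map.
case: u v => [//|a u] [//|b v] _ _.
rewrite /of_rtype /first_letters_differ /last_letters_differ.
case: t => [ab|cd|/andP[ab cd]].
- have [g /andP[gab _]] := separating_colouring ab ab.
  by exists g; rewrite /= eq_nat_of_bool.
- have [g /andP[gcd _]] := separating_colouring cd cd.
  by exists g; rewrite !last_map0 /= eq_nat_of_bool.
- have [g /andP[gab gcd]] := separating_colouring ab cd.
  by exists g; rewrite !last_map0 /= !eq_nat_of_bool gab.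
Qed.

Lemma two_letter_identity (S : Type) (op : S -> S -> S) t (u v : word) :
  sg_identity op u v -> of_rtype t u v ->
  exists u v : word, [/\ sg_identity op u v, of_rtype t u v &
                         all (fun i => (i < 2)%N) (u ++ v)].
Proof.
move=> uv t_uv; have [su sv _ _] := uv.
have [g t_g] := of_rtype_colouring su sv t_uv.
exists (map (nat_of_bool \o g) u), (map (nat_of_bool \o g) v); split => //.
  exact/sg_identity_map/of_rtype_neq/t_g.
by apply/allP => i; rewrite mem_cat => /orP[] /mapP[a _ ->] /=; case: (g a).
Qed.

(** * Commuting nilpotent maps *)

Lemma iter_additive0 (V : zmodType) (h : V -> V) : {morph h : a b / a - b} ->
  forall i, iter i h 0 = 0.
Proof.
move=> hB; have h0 : h 0 = 0 by have := hB 0 0; rewrite !subrr.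
by elim=> //= i ->.
Qed.

Section CommutingNilpotent.
Variables (V : zmodType) (f g : V -> V) (n : nat).
Hypotheses (fB : {morph f : a b / a - b}) (gB : {morph g : a b / a - b}).
Hypothesis fg : forall z, f (g z) = g (f z).
Hypotheses (f_nil : forall z, iter n f z = 0) (g_nil : forall z, iter n g z = 0).

Lemma commuting_nilpotent_sub z : iter (2 * n).-1 (fun w => f w - g w) z = 0.
Proof.
set D := fun w => f w - g w.
have DB : {morph D : a b / a - b}.
  move=> a b; rewrite /D fB gB !opprB -!addrA; congr (_ + _).
  by rewrite addrCA [RHS]addrCA [- _ - _]addrC.
have iterDB k : {morph iter k D : a b / a - b}.
  by elim: k => // k IH a b; rewrite !iterS IH DB.
have g_iter_f i w : g (iter i f w) = iter i f (g w).
  by elim: i => // i IH; rewrite !iterS -fg IH.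
suff vanish k i j w : ((2 * n).-1 <= i + j + k)%N ->
    iter k D (iter i f (iter j g w)) = 0.
  exact: (vanish _ 0%N 0%N).
elim: k i j w => [|k IH] i j w ijk.
  have [ni|ltin] := leqP n i.
    by rewrite -(subnK ni) iterD f_nil (iter_additive0 fB).
  have nj : (n <= j)%N by lia.
  by rewrite -(subnK nj) iterD g_nil (iter_additive0 gB) (iter_additive0 fB).
rewrite iterSr {2}/D g_iter_f -iterS -[g (iter j g w)]/(iter j.+1 g w) iterDB.
by rewrite !IH ?subrr //; lia.
Qed.

End CommutingNilpotent.

(** * Polynomial identities over an infinite domain *)

Lemma infinite_uniq_seq (T : eqType) : infinite_type T ->
  forall m, exists s : seq T, uniq s /\ size s = m.
Proof.
move=> T_inf; elim=> [|m [s [s_uniq s_size]]]; first by exists [::].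
have [x /negP x_s] : exists x, ~ x \in s.
  by apply: not_all_ex_not => s_full; apply: T_inf; exists s.
by exists (x :: s); rewrite /= x_s s_uniq s_size.
Qed.

Section PolynomialIdentities.
Variables (K : idomainType) (V : lmodType K).
Hypotheses (K_inf : infinite_type K) (V_tf : torsion_free V).

Lemma poly_eq0_coef m (v : nat -> V) :
  (forall l : K, \sum_(k < m) l ^+ k *: v k = 0) -> forall k, (k < m)%N -> v k = 0.
Proof.
move=> v_root k0 lt_k0m.
have [s [s_uniq s_size]] := infinite_uniq_seq K_inf m.
pose M := Vandermonde m (\row_(j < m) s`_j).
have M_v (j : 'I_m) : \sum_(k < m) M k j *: v k = 0.
  by rewrite -[RHS](v_root s`_j); apply: eq_bigr => k _; rewrite !mxE.
have detM_neq0 : \det M != 0.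
  rewrite det_Vandermonde; apply/prodf_neq0 => i _; apply/prodf_neq0 => j ij.
  rewrite !mxE subr_eq0 nth_uniq ?s_size //.
  by apply: contraTneq ij => ->; rewrite ltnn.
pose k := Ordinal lt_k0m.
have : \det M *: v k = 0.
  transitivity (\sum_(i < m) (M *m \adj M) i k *: v i).
    rewrite mul_mx_adj (bigD1 k) //= big1 ?addr0; first by rewrite mxE eqxx mulr1n.
    by move=> i ik; rewrite mxE (negbTE ik) mulr0n scale0r.
  under eq_bigr do rewrite mxE scaler_suml.
  rewrite exchange_big /= big1 // => j _.
  under eq_bigr do rewrite mulrC -scalerA.
  by rewrite -scaler_sumr M_v scaler0.
by case/V_tf => // /eqP; rewrite (negbTE detM_neq0).
Qed.

Lemma monomials_eq0 (c1 c2 : nat) (v1 v2 : V) : c1 != c2 ->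
  (forall l : K, l ^+ c1 *: v1 + l ^+ c2 *: v2 = 0) -> v1 = 0 /\ v2 = 0.
Proof.
move=> c12 v_root.
pose v k := (if k == c1 then v1 else 0) + (if k == c2 then v2 else 0).
have monomial c (w : V) l : (c <= maxn c1 c2)%N ->
    \sum_(k < (maxn c1 c2).+1) l ^+ k *: (if k == c :> nat then w else 0) = l ^+ c *: w.
  move=> c_le; rewrite (bigD1 (Ordinal (c_le : c < (maxn c1 c2).+1)%N)) //= eqxx.
  by rewrite big1 ?addr0 // => k; rewrite -val_eqE /= => /negbTE ->; rewrite scaler0.
have v_eq0 k : (k <= maxn c1 c2)%N -> v k = 0.
  move=> k_le; apply: (@poly_eq0_coef (maxn c1 c2).+1) => // l.
  under eq_bigr do rewrite scalerDr.
  by rewrite big_split /= !monomial ?leq_maxl ?leq_maxr.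
split.
- by have := v_eq0 c1 (leq_maxl _ _); rewrite /v eqxx (negbTE c12) addr0.
- by have := v_eq0 c2 (leq_maxr _ _); rewrite /v eqxx eq_sym (negbTE c12) add0r.
Qed.

End PolynomialIdentities.

Lemma nseqSr T k (c : T) : nseq k.+1 c = rcons (nseq k c) c.
Proof. by elim: k => //= k ->. Qed.

Lemma plin_word_rcons n i : (i <= n)%N ->
  plin_word n.+1 i = rcons (plin_word n i) 1%N.
Proof. by move=> le_in; rewrite /plin_word subSn // nseqSr rcons_cat rcons_cons. Qed.

Lemma plin_word_last n : plin_word n n = rcons (nseq n 1%N) 0%N.
Proof. by rewrite /plin_word subnn cats1. Qed.

Lemma size_plin_word n i : size (plin_word n i) = (i + (n - i)).+1.
Proof. by rewrite /plin_word size_cat /= !size_nseq addnS. Qed.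

Lemma of_rtype_plin (K : pzRingType) t n (u v : word) (al : nat -> K) :
  size u = n.+1 -> size v = n.+1 ->
  (forall i, (i <= n)%N -> nth 0%N u i != nth 0%N v i -> al i != 0) ->
  of_rtype t u v -> plin_of_rtype t n al.
Proof.
move=> su sv al_neq0.
rewrite /of_rtype /first_letters_differ /last_letters_differ -!nth0 -!nth_last su sv.
have al0 := al_neq0 _ (leq0n n); have aln := al_neq0 _ (leqnn n).
by case: t => /=; [move/al0 | move/aln | case/andP => /al0 -> /aln].
Qed.

Lemma plin_of_rtype_nontrivial (K : pzRingType) t n (al : nat -> K) :
  plin_of_rtype t n al -> exists2 i, (i <= n)%N & al i != 0.
Proof. by case: t => /= [||/andP[]] al_neq0; [exists 0%N | exists n | exists 0%N]. Qed.

Lemma plin_of_rtype_const (K : pzRingType) t n (c : K) :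
  c != 0 -> plin_of_rtype t n (fun=> c).
Proof. by case: t => /= ->. Qed.

Section Algebra.
Variables (K : idomainType) (R : lmodType K) (mul : R -> R -> R).
Hypothesis R_alg : is_assoc_algebra mul.

Lemma mA : associative mul. Proof. by case: R_alg. Qed.
Lemma mDl x y z : mul (x + y) z = mul x z + mul y z. Proof. by case: R_alg. Qed.
Lemma mDr x y z : mul x (y + z) = mul x y + mul x z. Proof. by case: R_alg. Qed.
Lemma mZl (a : K) x y : mul (a *: x) y = a *: mul x y. Proof. by case: R_alg. Qed.
Lemma mZr (a : K) x y : mul x (a *: y) = a *: mul x y. Proof. by case: R_alg. Qed.

Lemma m0l z : mul 0 z = 0.
Proof. by rewrite -(scale0r (0 : R)) mZl !scale0r. Qed.

Lemma m0r z : mul z 0 = 0.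
Proof. by rewrite -(scale0r (0 : R)) mZr !scale0r. Qed.

Lemma mBl x y z : mul (x - y) z = mul x z - mul y z.
Proof. by rewrite mDl -scaleN1r mZl scaleN1r. Qed.

Lemma mBr x y z : mul x (y - z) = mul x y - mul x z.
Proof. by rewrite mDr -scaleN1r mZr scaleN1r. Qed.

Lemma nil_ecomm_eq0 n : (0 < n)%N -> (forall y : R, npow mul y n = 0) ->
  forall x y : R, ecomm mul (2 * n - 1) x y = 0.
Proof.
move=> n_gt0 nil x y.
have -> : ecomm mul (2 * n - 1) x y = iter (2 * n).-1 (fun z => mul z y - mul y z) x.
  by rewrite /ecomm (_ : (2 * n).-1 = (2 * n - 1).-1.+1)%N ?iterSr //; lia.
rewrite -(prednK n_gt0) in nil *.
apply: commuting_nilpotent_sub => [a b|a b|z|z|z].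
- exact: mBl.
- exact: mBr.
- by rewrite mA.
- by rewrite iter_opr ?nil ?m0r //; exact: mA.
- by rewrite iter_opl ?nil ?m0l //; exact: mA.
Qed.

(** * Binomial identities *)

Lemma weval_scale f i (l : K) (w : word) : (0 < size w)%N ->
  weval mul (fun k => if k == i then l *: f k else f k) w
  = l ^+ count_mem i w *: weval mul f w.
Proof.
elim/last_ind: w => [//|[|b s] c IH] _.
  by rewrite /weval /=; case: eqP => _; rewrite ?expr1 ?expr0 ?scale1r.
rewrite !weval_rcons // IH // -cats1 count_cat /=.
case: (c == i) => /=; last by rewrite !addn0 mZl.
by rewrite addn1 exprSr mZl mZr scalerA mulrC.
Qed.

Hypotheses (K_inf : infinite_type K) (R_tf : torsion_free R).

Lemma binomial_vanishing_word a1 a2 (u1 u2 : word) :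
  binomial_identity mul a1 a2 u1 u2 -> ~~ perm_eq u1 u2 ->
  exists2 u : word, (0 < size u)%N & forall f, weval mul f u = 0.
Proof.
move=> [s1 s2 a_nontriv u_id] /allPn[i _ /= count_neq].
have u12 : u1 != u2 by apply: contraNneq count_neq => ->.
rewrite (negbTE u12) in a_nontriv.
have terms_eq0 f : a1 *: weval mul f u1 = 0 /\ a2 *: weval mul f u2 = 0.
  apply: (monomials_eq0 K_inf R_tf count_neq) => l.
  have := u_id (fun k => if k == i then l *: f k else f k).
  by rewrite !weval_scale // !scalerA ![a1 * _]mulrC ![a2 * _]mulrC -!scalerA.
case/orP: a_nontriv => a_neq0; [exists u1 | exists u2] => // f.
- by have [/R_tf[/eqP|]] := terms_eq0 f; rewrite ?(negbTE a_neq0).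
- by have [_ /R_tf[/eqP|]] := terms_eq0 f; rewrite ?(negbTE a_neq0).
Qed.

Lemma vanishing_word_sg_identity (u : word) : (0 < size u)%N ->
  (forall f, weval mul f u = 0) -> sg_identity mul u (rcons u 0%N).
Proof.
move=> su u0; split; rewrite ?size_rcons //.
  by apply/eqP => /(congr1 size); rewrite size_rcons; lia.
by move=> f; rewrite weval_rcons // u0 m0l.
Qed.

Lemma binomial_opp a1 a2 (u1 u2 : word) :
  binomial_identity mul a1 a2 u1 u2 -> a1 + a2 = 0 ->
  [/\ u1 != u2, a1 != 0 & a2 = - a1].
Proof.
case=> _ _ a_nontriv _ a12.
have a2E : a2 = - a1 by apply/eqP; rewrite -addr_eq0 addrC a12.
have u12 : u1 != u2 by apply: contraTneq a_nontriv => ->; rewrite eqxx a12 eqxx.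
by move: a_nontriv; rewrite (negbTE u12) a2E oppr_eq0 orbb; split.
Qed.

Lemma binomial_sg_identity a1 a2 (u1 u2 : word) :
  binomial_identity mul a1 a2 u1 u2 -> a1 + a2 = 0 -> sg_identity mul u1 u2.
Proof.
move=> u_bin /(binomial_opp u_bin)[u12 a1_neq0 a2E].
have [s1 s2 _ u_id] := u_bin; split => // f.
move: (u_id f); rewrite a2E scaleNr -scalerBr => /R_tf[/eqP|/eqP].
  by rewrite (negbTE a1_neq0).
by rewrite subr_eq0 => /eqP.
Qed.

Lemma binomial_bounded_nil a1 a2 (u1 u2 : word) :
  binomial_identity mul a1 a2 u1 u2 -> perm_eq u1 u2 -> a1 + a2 != 0 ->
  bounded_nil mul.
Proof.
move=> [s1 s2 _ u_id] u12 a12; exists (size u1); split => // r.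
move: (u_id (fun=> r)); rewrite !(weval_const mA) // -(perm_size u12).
by rewrite -scalerDl => /R_tf[/eqP|//]; rewrite (negbTE a12).
Qed.

Lemma binomial_nil_or_sg_identity a1 a2 (u1 u2 : word) :
  binomial_identity mul a1 a2 u1 u2 ->
  bounded_nil mul \/ exists u v : word, sg_identity mul u v.
Proof.
move=> u_bin; have [u12|] := boolP (perm_eq u1 u2); last first.
  move=> /(binomial_vanishing_word u_bin)[u su u0].
  by right; exists u, (rcons u 0%N); exact: vanishing_word_sg_identity.
have [a12|a12] := eqVneq (a1 + a2) 0.
  by right; exists u1, u2; exact: binomial_sg_identity u_bin a12.
by left; exact: binomial_bounded_nil u_bin u12 a12.
Qed.

(** * Linearization *)

Lemma mul_suml (I : Type) (r : seq I) (P : pred I) (F : I -> R) (z : R) :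
  mul (\sum_(i <- r | P i) F i) z = \sum_(i <- r | P i) mul (F i) z.
Proof. by apply: (big_morph (mul^~ z)) => [a b|]; rewrite ?mDl ?m0l. Qed.

Section Linearization.
Variables (x y : R) (A : nat -> bool).

Definition lin_subst (l : K) (a : nat) : R := if A a then y + l *: x else y.

(* Multiplies a coefficient sequence in [l] by [lin_subst l a]. *)
Definition lin_coef_step (c : nat -> R) (a k : nat) : R :=
  mul (c k) y + (if A a then (if k is k'.+1 then mul (c k') x else 0) else 0).

Definition lin_coef_init (a k : nat) : R :=
  match k with 0 => y | 1 => if A a then x else 0 | _ => 0 end.

Definition lin_coef (w : word) : nat -> R :=
  foldl lin_coef_step (lin_coef_init (head 0%N w)) (behead w).

Lemma lin_coef_rcons (w : word) a : (0 < size w)%N ->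
  lin_coef (rcons w a) = lin_coef_step (lin_coef w) a.
Proof. by case: w => // b s _; rewrite /lin_coef rcons_cons /= foldl_rcons. Qed.

Lemma lin_coef_eq0 (w : word) k : (0 < size w)%N -> (size w < k)%N ->
  lin_coef w k = 0.
Proof.
elim/last_ind: w k => [//|[|b s] c IH] k _; first by case: k => [|[|k]].
rewrite size_rcons lin_coef_rcons // /lin_coef_step => lt_sk.
rewrite IH ?m0l ?add0r //; last by lia.
by case: (A c); case: k lt_sk => [//|k] lt_sk; rewrite ?IH ?m0l //; lia.
Qed.

Lemma weval_lin_subst (w : word) l : (0 < size w)%N ->
  weval mul (lin_subst l) w = \sum_(k < (size w).+1) l ^+ k *: lin_coef w k.
Proof.
elim/last_ind: w => [//|[|b s] c IH] _.
  rewrite /= 2!big_ord_recl big_ord0 /lin_subst /lin_coef /weval /=.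
  by rewrite expr0 expr1 scale1r addr0; case: (A c); rewrite ?scaler0 ?addr0.
set w := b :: s; rewrite weval_rcons // IH // lin_coef_rcons // size_rcons.
rewrite mul_suml /lin_subst /lin_coef_step.
under eq_bigr do rewrite mZl.
under [RHS]eq_bigr do rewrite scalerDr.
rewrite big_split /= [in X in _ = X + _]big_ord_recr /= lin_coef_eq0 // m0l scaler0 addr0.
case: (A c); last by rewrite [X in _ = _ + X]big1 ?addr0 // => i _; rewrite scaler0.
under eq_bigr do rewrite mDr mZr scalerDr.
rewrite big_split /=; congr (_ + _).
rewrite [RHS]big_ord_recl scaler0 add0r; apply: eq_bigr => i _.
by rewrite !scalerA exprS mulrC.
Qed.

Lemma lin_coef0 (w : word) : (0 < size w)%N -> lin_coef w 0 = weval mul (fun=> y) w.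
Proof.
elim/last_ind: w => [//|[|b s] c IH] _ //.
by rewrite lin_coef_rcons // weval_rcons // /lin_coef_step IH // if_same addr0.
Qed.

Lemma lin_coef1 (w : word) : (0 < size w)%N ->
  lin_coef w 1 = \sum_(i < size w) (if A (nth 0%N w i) then
    weval mul (fun k => if k == 0%N then x else y) (plin_word (size w).-1 i) else 0).
Proof.
elim/last_ind: w => [//|[|b s] c IH] _; first by rewrite big_ord1.
set w := b :: s.
rewrite lin_coef_rcons // /lin_coef_step size_rcons big_ord_recr /= nth_rcons ltnn eqxx.
rewrite plin_word_last weval_rcons ?size_nseq // lin_coef0 //.
have -> : nseq (size w) 1%N = map (fun=> 1%N) w by elim: (w) => //= ? ? ->.
rewrite weval_map //; congr (_ + _).
rewrite IH // mul_suml; apply: eq_bigr => i _.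
rewrite -rcons_cons nth_rcons ltn_ord; case: (A _); last by rewrite m0l.
by rewrite plin_word_rcons ?weval_rcons ?size_plin_word // -ltnS.
Qed.

End Linearization.

Lemma binomial_linearization c1 c2 (w1 w2 : word) n (A : nat -> bool) :
  size w1 = n.+1 -> size w2 = n.+1 ->
  (forall f, c1 *: weval mul f w1 + c2 *: weval mul f w2 = 0) ->
  forall x y : R,
    \sum_(i < n.+1) (c1 * (A (nth 0%N w1 i))%:R + c2 * (A (nth 0%N w2 i))%:R)
      *: weval mul (fun k => if k == 0%N then x else y) (plin_word n i) = 0.
Proof.
move=> s1 s2 w_id x y.
have s1_gt0 : (0 < size w1)%N by rewrite s1.
have s2_gt0 : (0 < size w2)%N by rewrite s2.
pose v k := c1 *: lin_coef x y A w1 k + c2 *: lin_coef x y A w2 k.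
have v_root l : \sum_(k < n.+2) l ^+ k *: v k = 0.
  rewrite -[RHS](w_id (lin_subst x y A l)) !weval_lin_subst // s1 s2.
  rewrite !scaler_sumr -big_split; apply: eq_bigr => k _.
  by rewrite scalerDr !scalerA mulrC [c2 * _]mulrC.
have := poly_eq0_coef K_inf R_tf v_root (isT : 1 < n.+2)%N.
rewrite /v !lin_coef1 // s1 s2 /= => v1_eq0; rewrite -[RHS]v1_eq0.
rewrite !scaler_sumr -big_split; apply: eq_bigr => i _.
by rewrite scalerDl -!scalerA; case: (A _); case: (A _); rewrite ?scale1r ?scale0r ?scaler0.
Qed.

Lemma binomial_plin_const c1 c2 (w1 w2 : word) n :
  size w1 = n.+1 -> size w2 = n.+1 ->
  (forall f, c1 *: weval mul f w1 + c2 *: weval mul f w2 = 0) -> c1 + c2 != 0 ->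
  partial_linear_identity mul n (fun=> c1 + c2).
Proof.
move=> s1 s2 w_id c12; split; first by exists 0%N.
by move=> x y; have := binomial_linearization (fun=> true) s1 s2 w_id x y; rewrite !mulr1.
Qed.

Lemma vanishing_word_plin (u : word) : (0 < size u)%N ->
  (forall f, weval mul f u = 0) -> partial_linear_identity mul (size u).-1 (fun=> 1).
Proof.
move=> su u0; have su' : size u = (size u).-1.+1 by rewrite prednK.
have := @binomial_plin_const 1 0 u u _ su' su'; rewrite addr0 oner_neq0; apply => // f.
by rewrite u0 !scaler0 addr0.
Qed.

Lemma binomial_plin_colouring t a1 a2 (u1 u2 : word) n :
  binomial_identity mul a1 a2 u1 u2 -> a1 + a2 = 0 ->
  size u1 = n.+1 -> size u2 = n.+1 -> of_rtype t u1 u2 ->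
  exists al : nat -> K, partial_linear_identity mul n al /\ plin_of_rtype t n al.
Proof.
move=> u_bin a12 s1 s2 t_u; have [_ _ _ u_id] := u_bin.
have [_ a1_neq0 a2E] := binomial_opp u_bin a12.
have [s1_gt0 s2_gt0] : (0 < size u1)%N /\ (0 < size u2)%N by rewrite s1 s2.
have [g t_g] := of_rtype_colouring s1_gt0 s2_gt0 t_u.
pose al i := a1 * (g (nth 0%N u1 i))%:R + a2 * (g (nth 0%N u2 i))%:R.
have al_t : plin_of_rtype t n al.
  apply: (of_rtype_plin _ _ _ t_g); rewrite ?size_map // => i le_in.
  rewrite !(nth_map 0%N) ?s1 ?s2 ?ltnS //= /al a2E.
  by case: (g _); case: (g _); rewrite //= ?mulr1 ?mulr0 ?addr0 ?add0r ?oppr_eq0.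
exists al; split => //; split; first exact: plin_of_rtype_nontrivial al_t.
exact: binomial_linearization s1 s2 u_id.
Qed.

Lemma binomial_partial_linear t a1 a2 (u1 u2 : word) :
  binomial_identity mul a1 a2 u1 u2 -> of_rtype t u1 u2 ->
  exists n (al : nat -> K), partial_linear_identity mul n al /\ plin_of_rtype t n al.
Proof.
move=> u_bin t_u; have [s1 _ _ u_id] := u_bin.
have [u12|] := boolP (perm_eq u1 u2); last first.
  move=> /(binomial_vanishing_word u_bin)[u su u0].
  exists (size u).-1, (fun=> 1); split; first exact: vanishing_word_plin.
  exact/plin_of_rtype_const/oner_neq0.
set n := (size u1).-1.
have s1n : size u1 = n.+1 by rewrite prednK.
have s2n : size u2 = n.+1 by rewrite -(perm_size u12).
have [a12|a12] := eqVneq (a1 + a2) 0.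
  by exists n; exact: binomial_plin_colouring u_bin a12 s1n s2n t_u.
exists n, (fun=> a1 + a2); split; last exact: plin_of_rtype_const.
exact: binomial_plin_const s1n s2n u_id a12.
Qed.

End Algebra.

Theorem proposition2p1 (K : idomainType) (R : lmodType K) (mul : R -> R -> R)
  (K_infinite : infinite_type K) (R_alg : is_assoc_algebra mul)
  (R_tf : torsion_free R) :
  (* (i) *)
  (forall (S : Type) (op : S -> S -> S), associative op ->
     forall t : rtype,
       (exists u v : word, sg_identity op u v /\ of_rtype t u v) ->
       exists u v : word, [/\ sg_identity op u v, of_rtype t u v &
                              all (fun i => (i < 2)%N) (u ++ v)]) /\
  (* (ii) *)
  ((exists (a1 a2 : K) (u1 u2 : word), binomial_identity mul a1 a2 u1 u2) ->
     bounded_nil mul \/ exists u v : word, sg_identity mul u v) /\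
  (* (iii) *)
  (forall t : rtype,
     (exists (a1 a2 : K) (u1 u2 : word),
        binomial_identity mul a1 a2 u1 u2 /\ of_rtype t u1 u2) ->
     exists (n : nat) (al : nat -> K),
       partial_linear_identity mul n al /\ plin_of_rtype t n al) /\
  (* (iv) *)
  (forall n : nat, (0 < n)%N -> (forall y : R, npow mul y n = 0) ->
     forall x y : R, ecomm mul (2 * n - 1) x y = 0).
Proof.
split; first by move=> S op _ t [u [v [uv t_uv]]]; exact: two_letter_identity uv t_uv.
split; first by move=> [a1 [a2 [u1 [u2]]]]; exact: binomial_nil_or_sg_identity.
split; first by move=> t [a1 [a2 [u1 [u2 []]]]]; exact: binomial_partial_linear.
exact: nil_ecomm_eq0.
Qed.
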